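(* Let $G$ be a tree with $n\ge k\ge1$ vertices and let $P^*$ be a longest path of $G$. Then $h^r_k(G)\ge (n-k)+\sum_{e\in E} d^k_{P^*}(e)$.
   Context: All graphs are finite, simple, undirected. A configuration of $k$ agents is a $k$-tuple of pairwise distinct vertices of $G$ whose induced subgraph is connected (identified with its vertex set when convenient). Configurations $(v_1,\dots,v_k)$, $(v'_1,\dots,v'_k)$ are adjacent if for every $i$ either $v_i=v'_i$ or $(v_i,v'_i)\in E$. A restricted transition walk is a sequence of configurations $\mathcal C_0,\dots,\mathcal C_l$ such that consecutive configurations are adjacent and $\mathcal C_{t+1}$ contains exactly one vertex not in $\mathcal C_t$; it is spanning if every vertex lies in some $\mathcal C_t$. $h^r_k(G)$ is the minimum length of a spanning restricted transition walk. For a tree $G$, a path $P$ and $k\ge1$, define $d^k_P(e)\in\{0,1\}$ for every edge $e$: $d^k_P(e)=0$ if $e$ lies on $P$; otherwise write $e=(u,v)$ with $u$ closer to $P$ than $v$, let $T_P(e)$ be the component of $G-e$ containing $v$, rooted at $v$, and set $d^k_P(e)=1$ if $T_P(e)$ has height at least $k-1$ (equivalently, some vertex of $T_P(e)$ has distance at least $k$ from $u$), and $d^k_P(e)=0$ otherwise. *)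

From mathcomp Require Import all_boot all_order.
Set Implicit Arguments. Unset Strict Implicit. Unset Printing Implicit Defensive.

Section Graphs.
Variable T : finType.
Variable g : rel T.

Definition edges : {set {set T}} :=
  [set A : {set T} | [exists x, exists y, (A == [set x; y]) && g x y]].

Definition simple_graph := symmetric g /\ irreflexive g.

Definition is_tree :=
  simple_graph /\ (forall x y, connect g x y) /\ #|edges| = #|T| - 1.

Definition induced (S : {set T}) : rel T :=
  [rel a b | [&& g a b, a \in S & b \in S]].

Definition del_edge (A : {set T}) : rel T :=
  [rel a b | g a b && ([set a; b] != A)].

Fixpoint nbhd (n : nat) (S : {set T}) : {set T} :=
  match n with
  | 0 => S
  | n'.+1 => nbhd n' S :|: [set y | [exists z in nbhd n' S, g z y]]
  end.

Definition is_path (P : seq T) : bool :=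
  if P is x :: s then uniq P && path g x s else false.

Definition longest_path (P : seq T) :=
  is_path P /\ forall Q, is_path Q -> size Q <= size P.

Definition edge_on_path (P : seq T) (A : {set T}) : bool :=
  has (fun p : T * T => A == [set p.1; p.2]) (zip P (behead P)).

(* d^k_P(A) for an edge A, as 0/1:
   A = {u,v}, A not on P, u strictly closer to P than v (some radius n
   around P contains u but not v), and some vertex w of the component of
   G - A containing v has distance >= k from u. *)
Definition dk (k : nat) (P : seq T) (A : {set T}) : nat :=
  [exists u, exists v,
     [&& A == [set u; v], g u v, ~~ edge_on_path P A,
         [exists n : 'I_#|T|.+1, (u \in nbhd n [set x in P]) && (v \notin nbhd n [set x in P])]
       & [exists w, connect (del_edge A) v w && (w \notin nbhd k.-1 [set u])]]].

(* configurations of k agents: injective k-tuples inducing a connected subgraph *)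
Definition conf_set (k : nat) (C : {ffun 'I_k -> T}) : {set T} := [set C i | i in 'I_k].

Definition is_conf (k : nat) (C : {ffun 'I_k -> T}) : bool :=
  injectiveb C &&
  [forall x in conf_set C, forall y in conf_set C, connect (induced (conf_set C)) x y].

Definition conf_adj (k : nat) (C D : {ffun 'I_k -> T}) : bool :=
  [forall i, (C i == D i) || g (C i) (D i)].

Definition rstep (k : nat) (C D : {ffun 'I_k -> T}) : bool :=
  conf_adj C D && (#|conf_set D :\: conf_set C| == 1).

(* a restricted transition walk C_0 = c0, C_1..C_l = cs, of length l = size cs *)
Definition restricted_walk (k : nat) (c0 : {ffun 'I_k -> T}) (cs : seq {ffun 'I_k -> T}) : bool :=
  all (@is_conf k) (c0 :: cs) && path (@rstep k) c0 cs.

Definition spanning (k : nat) (c0 : {ffun 'I_k -> T}) (cs : seq {ffun 'I_k -> T}) : bool :=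
  [forall x, has (fun C => x \in conf_set C) (c0 :: cs)].
End Graphs.

From mathcomp Require Import all_boot all_order zify.
Set Implicit Arguments. Unset Strict Implicit. Unset Printing Implicit Defensive.

(* A spanning restricted walk [C_0, ..., C_l] adds exactly one new vertex per
   step except at revisits, steps whose configuration was entirely visited
   before; hence [n + #revisits <= k + l].  Call an edge [ab], oriented from
   [a] to [b], heavy when the component of [G - ab] containing [b] has a vertex
   at distance [>= k] from [a]; the edges with [d^k_P* = 1] are heavy edges
   oriented away from [P*].  If a heavy side avoids both the first and the last
   position of some agent, the walk must enter it (a connected configuration
   containing the far vertex fits inside it) and leave it again; the last exit
   moves onto [a], which was occupied at the first entry, so that step is a
   revisit, and it determines the edge.  Finally the two ends [x], [y] of a
   longest path are farthest from every vertex, and a counting along geodesics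
   shows that no pair of vertices has more heavy edges pointing to it than
   [x, y]; so the edges with [d^k_P* = 1] are at most the revisits. *)

Lemma cardsUD (T : finType) (A B : {set T}) : #|A :|: B| = #|A| + #|B :\: A|.
Proof. by have := cardsID A B; rewrite cardsU setIC; lia. Qed.

Lemma sum_bool_card (T : finType) (P : pred T) (b : T -> bool) :
  \sum_(i | P i) (b i : nat) = #|[set i | P i && b i]|.
Proof. by rewrite -sum1dep_card big_mkcondr /=; apply: eq_bigr => i _; case: (b i). Qed.

Lemma first_switch (P : pred nat) t : ~~ P 0 -> P t -> exists2 r, r < t & ~~ P r && P r.+1.
Proof.
elim: t => [|t IH] P0 Pt; first by rewrite Pt in P0.
case Pt': (P t); last by exists t => //; rewrite Pt' Pt.
by case: (IH P0 Pt') => r rt Pr; exists r => //; apply: leqW.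
Qed.

Lemma last_switch (P : pred nat) t l : P t -> ~~ P l -> t <= l ->
  exists s, [/\ t <= s, s < l, P s & ~~ P s.+1].
Proof.
elim: l => [|l IH] Pt Pl; first by rewrite leqn0 => /eqP tl; rewrite -tl Pt in Pl.
rewrite leq_eqVlt => /orP [/eqP tl|]; first by rewrite -tl Pt in Pl.
rewrite ltnS => tl; case Pl': (P l); first by exists l.
by case: (IH Pt (negbT Pl') tl) => s [ts sl Ps nPs]; exists s; split=> //; apply: leqW.
Qed.

Section Distance.
Variables (T : finType) (h : rel T).
Implicit Types S : {set T}.

Lemma nbhd_mono m n S : m <= n -> nbhd h m S \subset nbhd h n S.
Proof.
elim: n => [|n IH]; first by rewrite leqn0 => /eqP ->.
rewrite leq_eqVlt => /orP [/eqP -> //| /IH sub].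
by apply: subset_trans sub _; rewrite /= subsetUl.
Qed.

Lemma nbhd_path n S y : y \in nbhd h n S ->
  exists2 x, x \in S & exists s, [/\ path h x s, last x s = y & size s <= n].
Proof.
elim: n y => [|n IH] y /=; first by move=> yS; exists y => //; exists [::].
case/setUP => [/IH [x xS [s [p l sz]]]|].
  by exists x => //; exists s; split=> //; apply: leqW.
rewrite inE => /existsP [z /andP [/IH [x xS [s [p l sz]]] hz]].
exists x => //; exists (rcons s y).
by rewrite rcons_path p l last_rcons size_rcons.
Qed.

Lemma mem_nbhd_path n S x s : x \in S -> path h x s -> size s <= n ->
  last x s \in nbhd h n S.
Proof.
move=> xS; elim/last_ind: s n => [|s z IH] n.
  by move=> _ _; apply: subsetP (nbhd_mono S (leq0n n)) _ xS.
rewrite rcons_path size_rcons last_rcons => /andP [p hz].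
case: n => // n; rewrite ltnS => sz /=.
by apply/setUP; right; rewrite inE; apply/existsP; exists (last x s); rewrite IH.
Qed.

(* Unreachable vertices get the junk distance [#|T|]. *)
Definition dist x y := find (fun n => y \in nbhd h n [set x]) (iota 0 #|T|).

Lemma nbhd1_dist_leq x y n : y \in nbhd h n [set x] -> dist x y <= n.
Proof.
move=> yn; rewrite leqNgt; apply/negP => lt.
have nT : n < #|T|.
  apply: leq_trans lt _.
  by have := find_size (fun n => y \in nbhd h n [set x]) (iota 0 #|T|); rewrite size_iota.
by have := before_find 0 lt; rewrite nth_iota // add0n yn.
Qed.

Lemma dist_path_leq x s : path h x s -> dist x (last x s) <= size s.
Proof. by move=> p; apply/nbhd1_dist_leq/mem_nbhd_path; rewrite ?inE. Qed.

Lemma dist_geodesic x y : connect h x y ->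
  exists s, [/\ path h x s, last x s = y & size s = dist x y].
Proof.
case/connectP => p p0 ->; case: (shortenP p0) => p' p1 u1 _.
have reached : has (fun n => last x p' \in nbhd h n [set x]) (iota 0 #|T|).
  apply/hasP; exists (size p'); last by apply: mem_nbhd_path; rewrite ?inE.
  by rewrite mem_iota add0n /=; move/card_uniqP: u1 => /= <-; rewrite max_card.
have := nth_find 0 reached; rewrite -/(dist x (last x p')).
have dT : dist x (last x p') < #|T| by move: reached; rewrite has_find size_iota.
rewrite nth_iota // add0n => /nbhd_path [z /set1P -> [s [ps ls sz]]].
exists s; split=> //; apply/eqP; rewrite eqn_leq sz /= -{1}ls.
exact: dist_path_leq.
Qed.

Lemma nbhd1_dist x y n : connect h x y -> (y \in nbhd h n [set x]) = (dist x y <= n).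
Proof.
move=> c; apply/idP/idP; first exact: nbhd1_dist_leq.
move=> le; case: (dist_geodesic c) => s [p ly sz].
by rewrite -ly; apply: mem_nbhd_path => //; [rewrite inE | rewrite sz].
Qed.

Lemma distxx x : dist x x = 0.
Proof. by apply/eqP; rewrite -leqn0 nbhd1_dist_leq //= inE. Qed.

Lemma dist_edge x y : h x y -> dist x y <= 1.
Proof. by move=> hxy; apply: (@dist_path_leq x [:: y]); rewrite /= hxy. Qed.

Lemma dist_triangle x y z : connect h x y -> connect h y z ->
  dist x z <= dist x y + dist y z.
Proof.
move=> c1 c2; case: (dist_geodesic c1) => s [p l <-].
case: (dist_geodesic c2) => t [q <- <-].
by rewrite -size_cat -l -last_cat; apply: dist_path_leq; rewrite cat_path p l q.
Qed.

Lemma distC : symmetric h -> forall x y, connect h x y -> dist x y = dist y x.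
Proof.
move=> hsym.
have dist_rev x y : connect h x y -> dist y x <= dist x y.
  case/dist_geodesic => s [p <- <-].
  have hl : last (last x s) (rev (belast x s)) = x.
    have := congr1 (fun t => last x (rev t)) (lastI x s).
    by rewrite rev_rcons /= rev_cons last_rcons.
  have := @dist_path_leq (last x s) (rev (belast x s)).
  rewrite rev_path size_rev size_belast hl; apply.
  by rewrite (eq_path (e' := h)) // => u v /=; rewrite hsym.
move=> x y c; have c' : connect h y x by rewrite (sym_connect_sym hsym).
by apply/eqP; rewrite eqn_leq !dist_rev.
Qed.

Lemma connected_card_edges : (forall x y, connect h x y) -> #|T| - 1 <= #|edges h|.
Proof.
move=> hconn; case: (pickP (fun _ : T => true)) => [r _|none]; last first.
  by have -> : #|T| = 0 by apply: eq_card0 => x; have := none x.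
have parent x : x != r -> exists z, h x z && (dist z r < dist x r).
  move=> xr; case: (dist_geodesic (hconn x r)) => [[|z s] [/= p l sz]].
    by rewrite -l eqxx in xr.
  case/andP: p => hz p; exists z; rewrite hz -sz -l ltnS /=.
  exact: dist_path_leq.
pose par x := odflt x [pick z | h x z && (dist z r < dist x r)].
have parP x : x != r -> h x (par x) && (dist (par x) r < dist x r).
  move=> xr; rewrite /par; case: pickP => [z -> //|none].
  by case: (parent _ xr) => z; rewrite none.
(* Each non-root vertex is sent to the edge towards its parent; distances to
   the root rule out two vertices being each other's parent. *)
pose f x := [set x; par x].
have inj : {in [set~ r] &, injective f}.
  move=> x y; rewrite !inE => xr yr fxy; apply/eqP/negP => nxy.
  have : x \in f y by rewrite -fxy set21.
  case/set2P => [exy|xp]; first by rewrite exy eqxx in nxy.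
  have : y \in f x by rewrite fxy set21.
  case/set2P => [eyx|yp]; first by rewrite eyx eqxx in nxy.
  case/andP: (parP _ xr) => _; case/andP: (parP _ yr) => _.
  by rewrite -xp -yp => l1 l2; have := ltn_trans l1 l2; rewrite ltnn.
rewrite subn1 -(cardsC1 r) -(card_in_imset inj); apply: subset_leq_card.
apply/subsetP => A /imsetP [x]; rewrite !inE => xr ->.
by apply/existsP; exists x; apply/existsP; exists (par x); rewrite eqxx /= (andP (parP _ xr)).1.
Qed.

End Distance.

Section Revisits.
Variables (T : finType) (C : nat -> {set T}) (k l : nat).
Hypothesis card_C0 : #|C 0| = k.
Hypothesis one_new : forall t, t < l -> #|C t.+1 :\: C t| = 1.

Fixpoint visited t := if t is t'.+1 then visited t' :|: C t else C 0.

Lemma visitedP t x : reflect (exists2 i, i <= t & x \in C i) (x \in visited t).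
Proof.
elim: t => [|t IH] /=.
  by apply: (iffP idP) => [xC|[i]]; [exists 0 | rewrite leqn0 => /eqP <-].
apply: (iffP setUP) => [[/IH [i it xi]|xC]|[i]].
- by exists i => //; apply: leqW.
- by exists t.+1.
- rewrite leq_eqVlt => /orP [/eqP -> xC|it xi]; first by right.
  by left; apply/IH; exists i.
Qed.

Lemma sub_visited i t : i <= t -> C i \subset visited t.
Proof. by move=> it; apply/subsetP => x xi; apply/visitedP; exists i. Qed.

Definition revisit t : bool := C t.+1 \subset visited t.

Lemma card_visited_revisits t : t <= l -> #|visited t| + \sum_(i < t) revisit i <= k + t.
Proof.
elim: t => [|t IH] lt; first by rewrite big_ord0 card_C0 addn0.
have {}IH := IH (ltnW lt).
rewrite big_ord_recr cardsUD.
case: (boolP (revisit t)) => sub.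
  have /eqP -> : C t.+1 :\: visited t == set0 by rewrite setD_eq0.
  by rewrite /= cards0 addn0 addn1 !addnS ltnS.
have new_le1 : #|C t.+1 :\: visited t| <= 1.
  by rewrite -(one_new lt); exact/subset_leq_card/setDS/sub_visited.
by rewrite /= addn0 addnAC addnS -[(k + t).+1]addn1 leq_add.
Qed.

End Revisits.

Section RestrictedWalk.
Variables (T : finType) (g : rel T) (k : nat).
Variables (c0 : {ffun 'I_k -> T}) (cs : seq {ffun 'I_k -> T}).
Hypothesis walk : restricted_walk g c0 cs.
Hypothesis span : spanning c0 cs.
Local Notation l := (size cs).
Local Notation F t := (nth c0 (c0 :: cs) t).
Local Notation C t := (conf_set (F t)).

Lemma conf_walk t : t <= l -> is_conf g (F t).
Proof. by move=> tl; apply: (all_nthP c0 (andP walk).1); rewrite /= ltnS. Qed.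

Lemma step_walk t : t < l -> rstep g (F t) (F t.+1).
Proof. exact: (pathP c0 (andP walk).2). Qed.

Lemma card_conf t : t <= l -> #|C t| = k.
Proof.
by move=> /conf_walk /andP [/injectiveP inj _]; rewrite card_imset // card_ord.
Qed.

Lemma connected_conf t : t <= l ->
  forall x y, x \in C t -> y \in C t -> connect (induced g (C t)) x y.
Proof.
move=> /conf_walk /andP [_ /forallP cC] x y xC yC.
by move/implyP: (cC x) => /(_ xC) /forallP /(_ y) /implyP; apply.
Qed.

Lemma card_new_conf t : t < l -> #|C t.+1 :\: C t| = 1.
Proof. by move=> /step_walk /andP [_ /eqP]. Qed.

Lemma conf_covers z : exists2 t, t <= l & z \in C t.
Proof.
by move/forallP: span => /(_ z) /(has_nthP c0) [t tl zt]; exists t; rewrite // -ltnS.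
Qed.

Lemma conf_step_from t x : t < l -> x \in C t.+1 -> exists2 y, y \in C t & (y == x) || g y x.
Proof.
move=> /step_walk /andP [/forallP adj _] /imsetP [i _ ->].
by exists (F t i); [apply/imsetP; exists i | apply: adj].
Qed.

Lemma conf_step_to t x : t < l -> x \in C t -> exists2 y, y \in C t.+1 & (x == y) || g x y.
Proof.
move=> /step_walk /andP [/forallP adj _] /imsetP [i _ ->].
by exists (F t.+1 i); [apply/imsetP; exists i | apply: adj].
Qed.

Lemma card_revisits : #|T| + \sum_(t < l) revisit (fun t => C t) t <= k + l.
Proof.
have := card_visited_revisits (card_conf (leq0n l)) card_new_conf (leqnn l).
apply: leq_trans; rewrite leq_add2r; apply: subset_leq_card; apply/subsetP => z _.
by apply/visitedP; have [t tl zt] := conf_covers z; exists t.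
Qed.

End RestrictedWalk.

Section Tree.
Variables (T : finType) (g : rel T).
Hypothesis gsym : symmetric g.
Hypothesis girr : irreflexive g.
Hypothesis gconn : forall x y, connect g x y.
Hypothesis card_edges : #|edges g| = #|T| - 1.
Local Notation d := (dist g).

Lemma distC_tree x y : d x y = d y x.
Proof. exact: distC. Qed.

Lemma dist_triangle_tree x y z : d x z <= d x y + d y z.
Proof. exact: dist_triangle. Qed.

Lemma nbhd1_dist_tree x y n : (y \in nbhd g n [set x]) = (d x y <= n).
Proof. exact: nbhd1_dist. Qed.

Lemma del_edge_sym A : symmetric (del_edge g A).
Proof. by move=> x y; rewrite /del_edge /= gsym setUC. Qed.

Definition side (a b : T) : {set T} := [set w | connect (del_edge g [set a; b]) b w].

Lemma side_tail a b : b \in side a b.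
Proof. by rewrite inE connect0. Qed.

Lemma side_closed a b w z : w \in side a b -> g w z -> [set w; z] != [set a; b] ->
  z \in side a b.
Proof.
rewrite !inE => c gwz ne; apply: connect_trans c _.
by apply: connect1; rewrite /del_edge /= gwz ne.
Qed.

Lemma side_exit a b w z : w \in side a b -> z \notin side a b -> g w z ->
  w = b /\ z = a.
Proof.
move=> ws zs gwz.
have e : [set w; z] = [set a; b].
  by apply/eqP/negP => /negP ne; rewrite (side_closed ws gwz ne) in zs.
have : z \in [set a; b] by rewrite -e set22.
case/set2P => [za|zb]; last by rewrite zb side_tail in zs.
have : w \in [set a; b] by rewrite -e set21.
by case/set2P => [wa|//]; rewrite wa za girr in gwz.
Qed.

(* Every edge of a tree is a bridge: otherwise [G - ab] would be connected with
   only [#|T| - 2] edges. *)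
Lemma head_notin_side a b : g a b -> a \notin side a b.
Proof.
move=> gab; apply/negP; rewrite inE => cba.
pose h := del_edge g [set a; b].
have hconn x y : connect h x y.
  apply: (connect_sub _ (gconn x y)) => u v guv.
  case ne: ([set u; v] != [set a; b]); first by apply: connect1; rewrite /h /del_edge /= guv ne.
  move/negbFE/eqP: ne => e.
  have : u \in [set a; b] by rewrite -e set21.
  have : v \in [set a; b] by rewrite -e set22.
  case/set2P => ->; case/set2P => -> //; rewrite ?girr // in guv.
  by rewrite (sym_connect_sym (del_edge_sym _)).
have sub : edges h \subset edges g :\ [set a; b].
  apply/subsetP => A; rewrite !inE => /existsP [x /existsP [y /andP [/eqP -> /andP [gxy ne]]]].
  by rewrite ne; apply/existsP; exists x; apply/existsP; exists y; rewrite eqxx.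
have ab_edge : [set a; b] \in edges g.
  by rewrite inE; apply/existsP; exists a; apply/existsP; exists b; rewrite eqxx.
have := leq_trans (connected_card_edges hconn) (subset_leq_card sub).
by rewrite -card_edges (cardsD1 [set a; b]) ab_edge add1n ltnn.
Qed.

Lemma side_disjoint a b x : g a b -> x \in side a b -> x \notin side b a.
Proof.
move=> gab; rewrite !inE [[set b; a]]setUC => xa; apply: contra (head_notin_side gab).
rewrite inE => xb; apply: connect_trans xa _.
by rewrite (sym_connect_sym (del_edge_sym _)).
Qed.

Lemma path_into_side (a b : T) (s : seq T) (x : T) : g a b -> x \notin side a b -> path g x s ->
  last x s \in side a b -> d x a + 1 + d b (last x s) <= size s.
Proof.
move=> gab; elim: s x => [|y s IH] x xS /=; first by move=> _ xs; rewrite xs in xS.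
case/andP => gxy p ls; case yS: (y \in side a b).
  have [yb xa] : y = b /\ x = a by apply: side_exit; rewrite // gsym.
  by rewrite xa distxx add0n add1n ltnS -yb dist_path_leq.
have := IH y (negbT yS) p ls.
have := dist_triangle_tree x y a; have := dist_edge gxy; lia.
Qed.

Lemma dist_across_side a b x w : g a b -> x \notin side a b -> w \in side a b ->
  d x w = d x a + 1 + d b w.
Proof.
move=> gab xS wS; apply/eqP; rewrite eqn_leq; apply/andP; split.
  apply: leq_trans (dist_triangle_tree x a w) _; rewrite -addnA leq_add2l.
  by apply: leq_trans (dist_triangle_tree a b w) _; rewrite leq_add2r dist_edge.
case: (dist_geodesic (gconn x w)) => s [p l <-]; rewrite -l.
by apply: path_into_side; rewrite ?l.
Qed.

Lemma path_del_edge (x z y : T) (s : seq T) : x \notin y :: s -> path g y s ->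
  path (del_edge g [set x; z]) y s.
Proof.
elim: s y => [|y' s IH] y //; rewrite !inE !negb_or => /and3P [xy xy' xs] /= /andP [gyy p].
rewrite /del_edge /= gyy IH ?inE ?negb_or ?xy' // andbT.
apply/eqP => e; have : x \in [set y; y'] by rewrite e set21.
by case/set2P => ex; [rewrite ex eqxx in xy | rewrite ex eqxx in xy'].
Qed.

Lemma uniq_path_last_side (x y : T) (s : seq T) : uniq [:: x, y & s] -> path g y s -> last y s \in side x y.
Proof.
case/andP=> xys _ p; rewrite inE; apply/connectP; exists s => //.
exact: path_del_edge.
Qed.

Lemma dist_uniq_path (x : T) (s : seq T) : uniq (x :: s) -> path g x s -> d x (last x s) = size s.
Proof.
elim: s x => [|y s IH] x; first by rewrite /= distxx.
move=> u /andP [gxy p]; have /andP [_ uy] : (x \notin y :: s) && uniq (y :: s) := u.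
rewrite (dist_across_side gxy (head_notin_side gxy) (uniq_path_last_side u p)).
by rewrite distxx IH.
Qed.

Lemma dist_path_nth (x : T) (s : seq T) i j : path g x s -> i <= j -> j <= size s ->
  d (nth x (x :: s) i) (nth x (x :: s) j) <= j - i.
Proof.
move=> p ij; elim: j ij => [|j IH]; first by rewrite leqn0 => /eqP -> _; rewrite distxx.
rewrite leq_eqVlt => /orP [/eqP <- _|]; first by rewrite distxx.
rewrite ltnS => ij js; have := IH ij (ltnW js).
have : d (nth x (x :: s) j) (nth x (x :: s) j.+1) <= 1.
  exact/dist_edge/(pathP x p).
have := dist_triangle_tree (nth x (x :: s) i) (nth x (x :: s) j) (nth x (x :: s) j.+1).
lia.
Qed.

(* The vertex [nth x (x :: s) j] is the projection of [r] onto the path. *)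
Lemma dist_path_projection (x : T) (s : seq T) (r : T) : uniq (x :: s) -> path g x s ->
  exists j, [/\ j <= size s, d r x = d r (nth x (x :: s) j) + j &
     d r (last x s) = d r (nth x (x :: s) j) + (size s - j)].
Proof.
elim: s x => [|y s IH] x; first by move=> _ _; exists 0; rewrite /= addn0.
move=> u /andP [gxy p]; have /andP [_ uy] : (x \notin y :: s) && uniq (y :: s) := u.
have ls := uniq_path_last_side u p.
case rS: (r \in side x y).
  have [j [js e1 e2]] := IH y uy p.
  have js' : j < size (y :: s) by rewrite /= ltnS.
  exists j.+1; rewrite /= ltnS (set_nth_default y x js') subSS; split=> //.
  rewrite distC_tree (dist_across_side gxy (head_notin_side gxy) rS) distxx.
  by rewrite distC_tree e1 add0n add1n addnS.
exists 0; rewrite addn0 subn0; split=> //.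
rewrite (dist_across_side gxy (negbT rS) ls) (dist_uniq_path uy p) /=; lia.
Qed.

Variable k : nat.
Hypothesis k_gt0 : 0 < k.

(* [heavy a b] is the condition of [dk] on the edge [ab] oriented from [a] to
   [b], without reference to the path. *)
Definition heavy a b := [exists w, (w \in side a b) && (w \notin nbhd g k.-1 [set a])].

Lemma heavyP a b : reflect (exists2 w, w \in side a b & k <= d a w) (heavy a b).
Proof.
apply: (iffP existsP) => [[w /andP [ws wn]]|[w ws kw]].
  by exists w => //; move: wn; rewrite nbhd1_dist_tree -ltnNge prednK.
by exists w; rewrite ws nbhd1_dist_tree -ltnNge prednK.
Qed.

Definition heavy_to q := [set o : T * T | [&& g o.1 o.2, heavy o.1 o.2 & q \in side o.1 o.2]].

(* An edge pointing to [q] but not to [r] lies between them, and is determined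
   by the distance from [r] to its tail; heaviness puts that distance below
   [d r z - k] when [z] is farthest from [r]. *)
Lemma card_heavy_to_diff_leq r z q : (forall w, d r w <= d r z) ->
  #|heavy_to q :\: heavy_to r| <= (d r z).+1 - k.
Proof.
move=> far.
have mem o : o \in heavy_to q :\: heavy_to r ->
    [/\ g o.1 o.2, heavy o.1 o.2, q \in side o.1 o.2 & r \notin side o.1 o.2].
  case: o => a b; rewrite !inE /= => /andP [/negP nr /and3P [gab hv qs]]; split=> //.
  by apply/negP => rs; apply: nr; rewrite gab hv rs.
have inj : {in enum (heavy_to q :\: heavy_to r) &, injective (fun o : T * T => d r o.1)}.
  move=> [a b] [a' b']; rewrite !mem_enum => /mem /= [gab _ qs rs] /mem /= [gab' _ qs' rs'] e.
  have s1 := dist_across_side gab rs qs; have s2 := dist_across_side gab' rs' qs'.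
  have an : a \notin side a' b'.
    by apply/negP => aS; have := dist_across_side gab' rs' aS; move: e; lia.
  case bS: (b \in side a' b'); last first.
    by have := dist_across_side gab' (negbT bS) qs'; move: s1 s2 e; lia.
  by have [-> ->] := side_exit bS an (etrans (gsym b a) gab).
rewrite cardE -(size_map (fun o : T * T => d r o.1)) -[X in _ <= X](size_iota 0).
apply: uniq_leq_size; first by rewrite map_inj_in_uniq // enum_uniq.
move=> v /mapP [[a b]]; rewrite mem_enum => /mem /= [gab /heavyP [w ws kw] qs rs] ->.
rewrite mem_iota add0n.
have := dist_across_side gab rs ws; have := dist_across_side gab (head_notin_side gab) ws.
by rewrite distxx; have := far w; lia.
Qed.

(* Along a geodesic from [r] to [z], every edge with at least [k] more vertices
   ahead is heavy and points to [z]. *)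
Lemma card_heavy_to_diff_geq (s : seq T) (r : T) : path g r s -> d r (last r s) = size s ->
  (size s).+1 - k <= #|heavy_to (last r s) :\: heavy_to r|.
Proof.
elim: s r => [|y s IH] r; first by move=> _ _; rewrite /=; lia.
rewrite /= => /andP [gry p] hd; set z := last y s in hd *.
have dyz : d y z = size s.
  apply/eqP; rewrite eqn_leq dist_path_leq //=.
  have := dist_triangle_tree r y z; have := dist_edge gry; move: hd; lia.
have sub : heavy_to z :\: heavy_to y \subset heavy_to z :\: heavy_to r.
  apply/subsetP => -[a b]; rewrite !inE /= => /andP [nhy /and3P [gab hv zs]].
  rewrite gab hv zs /= andbT; apply/negP => rs.
  have ys : y \notin side a b by rewrite inE; apply: contra nhy => ys; rewrite gab hv ys.
  have {}zs : z \in side a b by rewrite inE.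
  have {}rs : r \in side a b by rewrite inE.
  have [ra ya] := side_exit rs ys gry.
  by have := dist_across_side gab ys zs; rewrite -ya distxx -ra; move: hd dyz; lia.
have {}IH := IH y p dyz.
case: (leqP k (size s).+1) => kle; last first.
  by apply: leq_trans (subset_leq_card sub); apply: leq_trans IH; lia.
have zs : z \in side r y.
  apply/negP => /negP zn; have := dist_across_side gry zn (side_tail r y).
  by rewrite distxx distC_tree [d z r]distC_tree; move: hd dyz; lia.
have ry : (r, y) \in (heavy_to z :\: heavy_to r) :\: (heavy_to z :\: heavy_to y).
  have hv : heavy r y by apply/heavyP; exists z => //; rewrite hd.
  have := head_notin_side gry; move: zs; rewrite !inE /= gry hv connect0 /= => -> /negbTE ->.
  by rewrite andbT.
have : #|heavy_to z :\: heavy_to y| < #|heavy_to z :\: heavy_to r|.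
  apply: proper_card; rewrite properE sub /=; apply/subsetPn.
  by exists (r, y); move: ry; rewrite inE => /andP [].
by move=> lt; apply: leq_trans lt; rewrite -/z subSn // ltnS.
Qed.

Lemma card_heavy_toU_leq_far r q z : (forall w, d r w <= d r z) ->
  #|heavy_to r :|: heavy_to q| <= #|heavy_to r :|: heavy_to z|.
Proof.
move=> far; rewrite !cardsUD leq_add2l.
apply: leq_trans (card_heavy_to_diff_leq q far) _.
case: (dist_geodesic (gconn r z)) => s [p l sz].
by have := card_heavy_to_diff_geq p; rewrite l sz; apply.
Qed.

Definition heavy_arcs := [set o : T * T | g o.1 o.2 && heavy o.1 o.2].

Definition heavy_away q1 q2 := [set o : T * T |
  [&& g o.1 o.2, heavy o.1 o.2, q1 \notin side o.1 o.2 & q2 \notin side o.1 o.2]].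

Lemma heavy_awayE q1 q2 : heavy_away q1 q2 = heavy_arcs :\: (heavy_to q1 :|: heavy_to q2).
Proof.
apply/setP => o; rewrite !inE.
by case: (g o.1 o.2); case: (heavy o.1 o.2); rewrite //= negb_or ?andbT.
Qed.

Lemma card_heavy_away q1 q2 : #|heavy_away q1 q2| = #|heavy_arcs| - #|heavy_to q1 :|: heavy_to q2|.
Proof.
rewrite heavy_awayE cardsDS //; apply/subsetP => o; rewrite !inE.
by case/orP => /and3P [-> -> _].
Qed.

Section LongestPath.
Variables (x : T) (s : seq T).
Hypotheses (uniq_xs : uniq (x :: s)) (path_xs : path g x s).
Hypothesis longest : forall Q, is_path g Q -> size Q <= size (x :: s).

Lemma dist_leq_longest a w : d a w <= size s.
Proof.
case/connectP: (gconn a w) => q q0 ->; case: (shortenP q0) => q' q1 u1 _.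
apply: leq_trans (dist_path_leq q1) _.
by have := @longest (a :: q'); rewrite /is_path u1 q1 /= ltnS; apply.
Qed.

Lemma dist_leq_path_ends r w : d r w <= maxn (d r x) (d r (last x s)).
Proof.
have [j [js e1 e2]] := dist_path_projection r uniq_xs path_xs.
have [i [iL f1 f2]] := dist_path_projection w uniq_xs path_xs.
have fx := dist_leq_longest w x; have fy := dist_leq_longest w (last x s).
set m := nth x (x :: s) j in e1 e2; set c := nth x (x :: s) i in f1 f2.
have t1 := dist_triangle_tree r m w; have t2 := dist_triangle_tree m c w.
have mc : d m c <= maxn (i - j) (j - i).
  case: (leqP j i) => ji.
    by apply: leq_trans (dist_path_nth path_xs ji iL) _; rewrite leq_maxl.
  rewrite distC_tree; apply: leq_trans (dist_path_nth path_xs (ltnW ji) js) _.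
  by rewrite leq_maxr.
rewrite [d c w]distC_tree in t2; lia.
Qed.


Lemma card_heavy_toU_leq_ends q1 q2 :
  #|heavy_to q1 :|: heavy_to q2| <= #|heavy_to x :|: heavy_to (last x s)|.
Proof.
have dist_ends : d x (last x s) = size s := dist_uniq_path uniq_xs path_xs.
have far_x w : d x w <= d x (last x s) by rewrite dist_ends dist_leq_longest.
have far_last w : d (last x s) w <= d (last x s) x.
  by rewrite [d _ x]distC_tree dist_ends dist_leq_longest.
have far_q1 := dist_leq_path_ends q1.
case: (leqP (d q1 x) (d q1 (last x s))) => c.
  have far1 w : d q1 w <= d q1 (last x s) by apply: leq_trans (far_q1 w) _; rewrite geq_max c leqnn.
  apply: leq_trans (card_heavy_toU_leq_far q2 far1) _.
  by rewrite setUC [in X in _ <= X]setUC; apply: card_heavy_toU_leq_far.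
have far1 w : d q1 w <= d q1 x by apply: leq_trans (far_q1 w) _; rewrite geq_max leqnn ltnW.
apply: leq_trans (card_heavy_toU_leq_far q2 far1) _.
by rewrite setUC; apply: card_heavy_toU_leq_far.
Qed.

Lemma card_heavy_away_ends q1 q2 : #|heavy_away x (last x s)| <= #|heavy_away q1 q2|.
Proof. by rewrite !card_heavy_away leq_sub2l // card_heavy_toU_leq_ends. Qed.

End LongestPath.

Lemma connect_exit_side (h : rel T) a b x w : subrel h g -> connect h x w ->
  x \notin side a b -> w \in side a b -> connect h x a.
Proof.
move=> sub /connectP [t pt ->]; elim: t x pt => [|y t IH] x /=.
  by move=> _ xn xs; rewrite xs in xn.
case/andP => hxy pt xn ls; case yS: (y \in side a b).
  by have [_ ->] := side_exit yS xn (etrans (gsym y x) (sub _ _ hxy)).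
exact: connect_trans (connect1 hxy) (IH y pt (negbT yS) ls).
Qed.

Lemma side_tail_inj a b b' w : g a b -> g a b' -> w \in side a b -> w \in side a b' ->
  b = b'.
Proof.
move=> gab gab' ws ws'; apply/eqP/negP => nb.
have bn : b \notin side a b'.
  apply/negP => bs.
  have ne : [set b; a] != [set a; b'].
    apply/negP => /eqP e; have : b \in [set a; b'] by rewrite -e set21.
    by case/set2P => eb; [rewrite eb girr in gab | rewrite eb eqxx in nb].
  by move: (head_notin_side gab'); rewrite (side_closed bs (etrans (gsym b a) gab) ne).
have sub : subrel (del_edge g [set a; b]) g by move=> u v /andP [].
move: ws; rewrite inE => c.
by move: (head_notin_side gab); rewrite inE (connect_exit_side sub c bn ws').
Qed.

Lemma path_induced_sub (S : {set T}) x t : path (induced g S) x t -> x \in S ->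
  {subset x :: t <= S}.
Proof.
elim: t x => [|z t IH] x /=; first by move=> _ xs v; rewrite inE => /eqP ->.
case/andP => /and3P [_ _ zs] p xs v; rewrite inE => /orP [/eqP -> //|].
exact: IH.
Qed.

Lemma dist_lt_connected_card (S : {set T}) a w :
  (forall x y, x \in S -> y \in S -> connect (induced g S) x y) ->
  a \in S -> w \in S -> d a w < #|S|.
Proof.
move=> cS aS wS; case/connectP: (cS a w aS wS) => t pt ->.
case: (shortenP pt) => t' pt' u' _.
have allS : {subset a :: t' <= enum S}.
  by move=> v vin; rewrite mem_enum (path_induced_sub pt' aS vin).
rewrite cardE; apply: leq_trans (uniq_leq_size u' allS); rewrite /= ltnS.
by apply/dist_path_leq/(sub_path _ pt') => u v /and3P [].
Qed.

(* A connected set of [k] vertices meeting [side a b] at distance [>= k] from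
   [a] cannot reach [a], hence stays inside the side. *)
Lemma connected_sub_side (S : {set T}) a b w :
  (forall x y, x \in S -> y \in S -> connect (induced g S) x y) -> #|S| = k ->
  g a b -> w \in S -> w \in side a b -> k <= d a w -> S \subset side a b.
Proof.
move=> cS Sk gab wS ws kw; apply/subsetP => x xS; apply: contraT => xn.
have sub : subrel (induced g S) g by move=> u v /and3P [].
have aS : a \in S.
  have : connect (induced g S) x a by apply: connect_exit_side sub (cS x w xS wS) xn ws.
  by case/connectP => t pt ->; apply: (path_induced_sub pt xS); rewrite mem_last.
by have := dist_lt_connected_card cS aS wS; rewrite Sk ltnNge kw.
Qed.

Section Walk.
Variables (c0 : {ffun 'I_k -> T}) (cs : seq {ffun 'I_k -> T}).
Hypothesis walk : restricted_walk g c0 cs.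
Hypothesis span : spanning c0 cs.
Local Notation l := (size cs).
Local Notation F t := (nth c0 (c0 :: cs) t).
Local Notation C t := (conf_set (F t)).

Lemma enter_side_head a b t : t < l -> ~~ (C t \subset side a b) ->
  C t.+1 \subset side a b -> a \in C t.
Proof.
move=> tl /subsetPn [x xC xn] sub.
have [y yC /orP [/eqP exy|gxy]] := conf_step_to walk tl xC.
  by move: (subsetP sub _ yC); rewrite -exy (negbTE xn).
by have [_ <-] := side_exit (subsetP sub _ yC) xn (etrans (gsym y x) gxy).
Qed.

Lemma exit_side_head a b t : t < l -> C t \subset side a b ->
  ~~ (C t.+1 \subset side a b) -> a \in C t.+1.
Proof.
move=> tl sub /subsetPn [x xC xn].
have [y yC /orP [/eqP eyx|gyx]] := conf_step_from walk tl xC.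
  by move: (subsetP sub _ yC); rewrite eyx (negbTE xn).
by have [_ <-] := side_exit (subsetP sub _ yC) xn gyx.
Qed.

Definition exit_at (o : T * T) t : bool :=
  [&& C t \subset side o.1 o.2, o.1 \in C t.+1 & revisit (fun i => C i) t].

Lemma exit_at_inj o o' t : t < l -> g o.1 o.2 -> g o'.1 o'.2 ->
  exit_at o t -> exit_at o' t -> o = o'.
Proof.
case: o o' => [a b] [a' b'] tl /= gab gab' /and3P [/= s1 i1 _] /and3P [/= s2 i2 _].
have new x y : g x y -> C t \subset side x y -> x \in C t.+1 -> x \in C t.+1 :\: C t.
  move=> gxy sub xC; rewrite in_setD xC andbT.
  by apply: contra (head_notin_side gxy); apply: subsetP.
move/eqP/cards1P: (card_new_conf walk tl) => [z ez].
move: (new _ _ gab s1 i1) (new _ _ gab' s2 i2); rewrite ez !in_set1 => /eqP ea /eqP ea'.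
subst a a'.
have /card_gt0P [w wC] : 0 < #|C t| by rewrite (card_conf walk (ltnW tl)).
by rewrite (side_tail_inj gab gab' (subsetP s1 _ wC) (subsetP s2 _ wC)).
Qed.

(* The walk ends outside [side a b] but must at some time lie inside it; the
   step leaving it for the last time brings back the vertex [a], which was
   already visited when the walk first entered. *)
Lemma exit_at_exists a b q1 q2 : g a b -> heavy a b -> q1 \in C 0 -> q2 \in C l ->
  q1 \notin side a b -> q2 \notin side a b -> exists2 t, t < l & exit_at (a, b) t.
Proof.
move=> gab /heavyP [w ws kw] q1C q2C q1s q2s.
have [tau tl wC] := conf_covers span w.
pose P t := C t \subset side a b.
have P_tau : P tau.
  exact: connected_sub_side (connected_conf walk tl) (card_conf walk tl) gab wC ws kw.
have nP0 : ~~ P 0 by apply/subsetPn; exists q1.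
have nPl : ~~ P l by apply/subsetPn; exists q2.
have [r rt /andP [nPr Pr1]] := first_switch nP0 P_tau.
have [t [taut tl' Pt nPt1]] := last_switch P_tau nPl tl.
have aCr := enter_side_head (leq_trans rt tl) nPr Pr1.
have aCt := exit_side_head tl' Pt nPt1.
exists t => //; apply/and3P; split=> //; apply/subsetP => v vC.
case vt: (v \in C t); first exact: subsetP (sub_visited _ (leqnn t)) _ vt.
move/eqP/cards1P: (card_new_conf walk tl') => [z ez].
have: a \in C t.+1 :\: C t.
  by rewrite in_setD aCt andbT; apply: contra (head_notin_side gab); apply: subsetP.
have : v \in C t.+1 :\: C t by rewrite in_setD vt vC.
rewrite ez !in_set1 => /eqP -> /eqP <-.
exact: subsetP (sub_visited _ (leq_trans (ltnW rt) taut)) _ aCr.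
Qed.

Lemma card_heavy_away_leq_revisits q1 q2 : q1 \in C 0 -> q2 \in C l ->
  #|heavy_away q1 q2| <= \sum_(t < l) revisit (fun t => C t) t.
Proof.
move=> q1C q2C; pose exit o := [pick t : 'I_l | exit_at o t].
have exitP o : o \in heavy_away q1 q2 -> exists2 t, exit o = Some t & exit_at o t.
  case: o => a b; rewrite inE /= => /and4P [gab hv q1s q2s].
  have [t tl et] := exit_at_exists gab hv q1C q2C q1s q2s.
  rewrite /exit; case: pickP => [t' et'|none]; first by exists t'.
  by have := none (Ordinal tl); rewrite /= et.
have inj : {in heavy_away q1 q2 &, injective exit}.
  move=> o o' oX o'X e; have [t et ot] := exitP o oX; have [t' et' ot'] := exitP o' o'X.
  move: e; rewrite et et' => -[tt']; subst t'.
  move: oX o'X; rewrite !inE => /and4P [go _ _ _] /and4P [go' _ _ _].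
  exact: exit_at_inj (ltn_ord t) go go' ot ot'.
rewrite sum_bool_card -(card_in_imset inj) -[X in _ <= X](card_imset _ (@Some_inj _)).
apply: subset_leq_card; apply/subsetP => _ /imsetP [o oX ->].
have [t -> /and3P [_ _ rt]] := exitP o oX.
by apply/imsetP; exists t; rewrite ?inE.
Qed.

End Walk.

Lemma path_del_edge_off x s A : path g x s -> ~~ edge_on_path (x :: s) A ->
  path (del_edge g A) x s.
Proof.
rewrite /edge_on_path /=; elim: s x => [|y s IH] x //= /andP [gxy p].
by rewrite negb_or eq_sym => /andP [ne nh]; rewrite /del_edge /= gxy ne IH.
Qed.

Lemma path_notin_side x s u v n : path g x s -> g u v ->
  ~~ edge_on_path (x :: s) [set u; v] ->
  u \in nbhd g n [set z in x :: s] -> v \notin nbhd g n [set z in x :: s] ->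
  {in x :: s, forall p, p \notin side u v}.
Proof.
move=> ps guv off un vn p pin; apply/negP => psd.
have pd := path_del_edge_off ps off.
have on_side q : q \in x :: s -> q \in side u v.
  move=> qin; move: psd; rewrite !inE => cvp; apply: connect_trans cvp _.
  apply: connect_trans (path_connect pd qin).
  by rewrite (sym_connect_sym (del_edge_sym _)) (path_connect pd pin).
case/nbhd_path: un => p0; rewrite inE => p0in [t [pt lt st]].
have p0n := side_disjoint guv (on_side _ p0in).
have := path_into_side (etrans (gsym v u) guv) p0n pt.
rewrite lt side_tail distxx addn0 => /(_ isT) le.
have [t' [pt' lt' st']] := dist_geodesic (gconn p0 v).
have sz : size t' <= n by rewrite st'; exact: leq_trans (leq_trans (leq_addr 1 _) le) st.
have p0P : p0 \in [set z in x :: s] by rewrite inE.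
by have := mem_nbhd_path p0P pt' sz; rewrite lt' (negbTE vn).
Qed.

Lemma sum_dk_leq_heavy_away x s : path g x s ->
  \sum_(A in edges g) dk g k (x :: s) A <= #|heavy_away x (last x s)|.
Proof.
move=> p; pose f (o : T * T) := [set o.1; o.2].
have dk_le A : A \in edges g -> dk g k (x :: s) A <= (A \in f @: heavy_away x (last x s)).
  move=> _; rewrite /dk; case: existsP => [[a /existsP [b]]|] //.
  case/and5P => /eqP eA gab off /existsP [n /andP [an bn]] /existsP [w /andP [cw wn]].
  rewrite eA in off; have away := path_notin_side p gab off an bn.
  have hv : heavy a b by apply/existsP; exists w; rewrite inE -eA cw wn.
  suff -> : A \in f @: heavy_away x (last x s) by [].
  apply/imsetP; exists (a, b) => //.
  by rewrite inE /= gab hv !away ?mem_head ?mem_last.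
apply: leq_trans (leq_sum _ dk_le) _.
rewrite sum_bool_card; apply: leq_trans (leq_imset_card f _).
by apply: subset_leq_card; apply/subsetP => A; rewrite inE => /andP [].
Qed.

End Tree.

Theorem mainTheorem6 (T : finType) (g : rel T) (k : nat) (Pstar : seq T) :
  is_tree g -> 1 <= k -> k <= #|T| -> longest_path g Pstar ->
  forall (c0 : {ffun 'I_k -> T}) (cs : seq {ffun 'I_k -> T}),
    restricted_walk g c0 cs -> spanning c0 cs ->
    (#|T| - k) + \sum_(A in edges g) dk g k Pstar A <= size cs.
Proof.
move=> [[gsym girr] [gconn gE]] k_gt0 k_le [+ longest] c0 cs walk span.
case: Pstar longest => [//|x s] longest /andP [uniq_xs path_xs].
pose i0 : 'I_k := Ordinal k_gt0; pose cl := nth c0 (c0 :: cs) (size cs).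
have q1C : c0 i0 \in conf_set c0 by apply/imsetP; exists i0.
have qlC : cl i0 \in conf_set cl by apply/imsetP; exists i0.
have sum_le := leq_trans (sum_dk_leq_heavy_away gsym girr gconn gE k path_xs)
  (leq_trans (card_heavy_away_ends gsym girr gconn gE k_gt0 uniq_xs path_xs longest _ _)
     (card_heavy_away_leq_revisits gsym girr gconn gE k_gt0 walk span q1C qlC)).
rewrite -(leq_add2l k) addnA subnKC //.
by apply: leq_trans (card_revisits walk span); rewrite leq_add2l.
Qed.
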